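(* Let $m\ge1$, $r_1,r_2>0$ with $r_1^2+r_2^2=1$, and let $\varphi_1:\mathbb{S}^m\to\mathbb{S}^{n_1}(r_1)$ and $\varphi_2:\mathbb{S}^m\to\mathbb{S}^{n_2}(r_2)$ be harmonic maps with constant energy densities. Then the map $\varphi=\iota\circ(\varphi_1,\varphi_2):\mathbb{S}^m\to\mathbb{S}^{n_1+n_2+1}$, where $\iota$ is the canonical inclusion of $\mathbb{S}^{n_1}(r_1)\times\mathbb{S}^{n_2}(r_2)$ into $\mathbb{S}^{n_1+n_2+1}$, is proper biharmonic if and only if $r_1=r_2=1/\sqrt2$ and $e(\varphi_1)\neq e(\varphi_2)$.
   Context: $\mathbb{S}^n(r)$ is the round sphere of radius $r$ centred at $0$, $\mathbb{S}^m$ the unit sphere. Energy density $e(\varphi)=\frac12|d\varphi|^2$. Proper biharmonic means vanishing bitension field $\tau_2(\varphi)=-\Delta\tau(\varphi)-\operatorname{trace}R^N(d\varphi\cdot,\tau(\varphi))d\varphi\cdot$ (with $\Delta=-\operatorname{trace}\nabla^2$) but nonvanishing tension field $\tau(\varphi)=\operatorname{trace}\nabla d\varphi$. *)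

(* Maps between spheres are represented
   extrinsically: points of S^m are unit vectors of R^(m+1) = 'rV[R]_(m.+1)
   (Euclidean norm, written with an explicit dot product), a map
   phi : S^m -> S^n(r) is a function 'rV_(m.+1) -> 'rV_(n.+1) whose values
   off S^m are irrelevant (everything is computed through the
   0-homogeneous extension). *)
From HB Require Import structures.
From mathcomp Require Import all_boot all_order all_algebra.
From mathcomp Require Import all_classical all_reals all_analysis.
Set Implicit Arguments. Unset Strict Implicit. Unset Printing Implicit Defensive.
Import Order.TTheory GRing.Theory Num.Theory.
Import numFieldNormedType.Exports.
Local Open Scope classical_set_scope.
Local Open Scope ring_scope.

Section SphereMaps.
Variable R : realType.

Definition dot (k : nat) (u v : 'rV[R]_k) : R := \sum_(i < k) u 0 i * v 0 i.

Definition sphere {k : nat} (r : R) : set 'rV[R]_k := [set x | dot x x = r ^+ 2].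

Definition ebase (k : nat) (j : 'I_k) : 'rV[R]_k := delta_mx 0 j.

Variables (k N : nat).  (* domain R^k (k = m+1), target R^N *)

Definition hext (f : 'rV[R]_k -> 'rV[R]_N) : 'rV[R]_k -> 'rV[R]_N :=
  fun x => f ((Num.sqrt (dot x x))^-1 *: x).

Fixpoint iterD (s : seq 'rV[R]_k) (g : 'rV[R]_k -> 'rV[R]_N) : 'rV[R]_k -> 'rV[R]_N :=
  match s with
  | [::] => g
  | v :: s' => fun x => 'D_v (iterD s' g) x
  end.

Definition smooth_on_sphere (f : 'rV[R]_k -> 'rV[R]_N) : Prop :=
  forall (s : seq 'rV[R]_k) (x : 'rV[R]_k), x != 0 -> differentiable (iterD s (hext f)) x.

(* differential of f on the sphere applied to the ambient basis vector e_j
   (equals df(tangential part of e_j)) *)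
Definition dS (f : 'rV[R]_k -> 'rV[R]_N) (j : 'I_k) (x : 'rV[R]_k) : 'rV[R]_N :=
  'D_(ebase j) (hext f) x.

(* Laplace-Beltrami operator (trace of the Hessian) of S^(k-1), componentwise *)
Definition lapS (f : 'rV[R]_k -> 'rV[R]_N) (x : 'rV[R]_k) : 'rV[R]_N :=
  \sum_(j < k) 'D_(ebase j) ('D_(ebase j) (hext f)) x.

Definition dnorm2 (f : 'rV[R]_k -> 'rV[R]_N) (x : 'rV[R]_k) : R :=
  \sum_(j < k) dot (dS f j x) (dS f j x).
Definition energy_density (f : 'rV[R]_k -> 'rV[R]_N) (x : 'rV[R]_k) : R :=
  dnorm2 f x / 2.

Definition tproj (r : R) (y w : 'rV[R]_N) : 'rV[R]_N := w - (dot w y / r ^+ 2) *: y.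

(* tension field tau(phi) = trace nabla d phi of phi : S^(k-1) -> S^(N-1)(r) *)
Definition tension (r : R) (f : 'rV[R]_k -> 'rV[R]_N) (x : 'rV[R]_k) : 'rV[R]_N :=
  tproj r (f x) (lapS f x).

Definition harmonic_into (r : R) (f : 'rV[R]_k -> 'rV[R]_N) : Prop :=
  forall x : 'rV[R]_k, sphere 1 x -> tension r f x = 0.

(* For a map phi into the unit sphere S^(N-1) and a section V of phi^{-1} T S^(N-1):
   rough Laplacian  trace nabla^2 V = -Delta V  computed with the pull-back
   connection nabla^phi_X V = tproj (dV(X)) *)
Definition roughLap (f V : 'rV[R]_k -> 'rV[R]_N) (x : 'rV[R]_k) : 'rV[R]_N :=
  tproj 1 (f x) (lapS V x) + \sum_(j < k) dot (V x) (dS f j x) *: dS f j x.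

(* trace R^N(d phi . , V) d phi .   for the unit sphere,
   R^N(X,Y)Z = <Y,Z> X - <X,Z> Y *)
Definition curvTrace (f V : 'rV[R]_k -> 'rV[R]_N) (x : 'rV[R]_k) : 'rV[R]_N :=
  \sum_(j < k) (dot (V x) (dS f j x) *: dS f j x - dot (dS f j x) (dS f j x) *: V x).

(* bitension field tau_2(phi) = -Delta tau(phi) - trace R^N(d phi, tau(phi)) d phi *)
Definition bitension (f : 'rV[R]_k -> 'rV[R]_N) (x : 'rV[R]_k) : 'rV[R]_N :=
  roughLap f (tension 1 f) x - curvTrace f (tension 1 f) x.

Definition proper_biharmonic (f : 'rV[R]_k -> 'rV[R]_N) : Prop :=
  (forall x : 'rV[R]_k, sphere 1 x -> bitension f x = 0) /\
  ~ (forall x : 'rV[R]_k, sphere 1 x -> tension 1 f x = 0).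

End SphereMaps.

(* iota o (phi1, phi2) : S^m -> S^(n1+n2+1) subset R^(n1+1) x R^(n2+1) *)
Definition sphere_pair_map (R : realType) (k N1 N2 : nat)
  (f1 : 'rV[R]_k -> 'rV[R]_N1) (f2 : 'rV[R]_k -> 'rV[R]_N2) :
  'rV[R]_k -> 'rV[R]_(N1 + N2) := fun x => row_mx (f1 x) (f2 x).

From HB Require Import structures.
From mathcomp Require Import all_boot all_order all_algebra.
From mathcomp Require Import all_classical all_reals all_analysis.
From mathcomp Require Import ring lra.
Import Order.TTheory GRing.Theory Num.Theory.
Import numFieldNormedType.Exports.
Set Implicit Arguments. Unset Strict Implicit. Unset Printing Implicit Defensive.
Local Open Scope ring_scope.

(* Differentiating |f_i|^2 = r_i^2 twice and tracing gives <lapS f_i, f_i> = -|df_i|^2 = -2 c_i;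
   as harmonicity makes lapS f_i normal to the sphere, lapS f_i = -(2 c_i / r_i^2) f_i.
   Hence every field built from Phi = (f1, f2) has the form (s f1, t f2): with
   D = 2 c2 r1^2 - 2 c1 r2^2, a = D / r1^2 and b = -D / r2^2 one finds tau(Phi) = (a f1, b f2)
   and tau_2(Phi) = (r2^2 (a^2 - b^2) f1, r1^2 (b^2 - a^2) f2).  Since f1 and f2 never vanish,
   Phi is proper biharmonic iff D <> 0 and a^2 = b^2, i.e. iff r1 = r2 and c1 <> c2. *)

Lemma sum_row_mx (V : nmodType) m n1 n2 I (r : seq I) (P : pred I)
    (A : I -> 'M[V]_(m, n1)) (B : I -> 'M[V]_(m, n2)) :
  \sum_(i <- r | P i) row_mx (A i) (B i) =
  row_mx (\sum_(i <- r | P i) A i) (\sum_(i <- r | P i) B i).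
Proof.
elim/big_rec3: _ => [|i a b c _ ->]; first by rewrite row_mx0.
by rewrite add_row_mx.
Qed.

Section Dot.
Variable R : realType.

Lemma dotC n (u v : 'rV[R]_n) : dot u v = dot v u.
Proof. by apply: eq_bigr => i _; rewrite mulrC. Qed.

Lemma dotZl n a (u v : 'rV[R]_n) : dot (a *: u) v = a * dot u v.
Proof. by rewrite /dot mulr_sumr; apply: eq_bigr => i _; rewrite mxE mulrA. Qed.

Lemma dotDl n (u w v : 'rV[R]_n) : dot (u + w) v = dot u v + dot w v.
Proof. by rewrite /dot -big_split; apply: eq_bigr => i _; rewrite mxE mulrDl. Qed.

Lemma dot0l n (v : 'rV[R]_n) : dot 0 v = 0.
Proof. by rewrite /dot big1 // => i _; rewrite mxE mul0r. Qed.

Lemma dot_suml n I (r : seq I) (P : pred I) (F : I -> 'rV[R]_n) v :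
  dot (\sum_(i <- r | P i) F i) v = \sum_(i <- r | P i) dot (F i) v.
Proof. by elim/big_rec2: _ => [|i a b _ <-]; rewrite ?dot0l ?dotDl. Qed.

Lemma dot_row_mx n1 n2 (u1 v1 : 'rV[R]_n1) (u2 v2 : 'rV[R]_n2) :
  dot (row_mx u1 u2) (row_mx v1 v2) = dot u1 v1 + dot u2 v2.
Proof.
rewrite /dot big_split_ord /=.
by congr (_ + _); apply: eq_bigr => i _; rewrite ?row_mxEl ?row_mxEr.
Qed.

Lemma dot_ge0 n (u : 'rV[R]_n) : 0 <= dot u u.
Proof. by apply: sumr_ge0 => i _; rewrite -expr2 sqr_ge0. Qed.

Lemma dot_eq0 n (u : 'rV[R]_n) : (dot u u == 0) = (u == 0).
Proof.
apply/idP/eqP => [|->]; last by rewrite dot0l.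
rewrite psumr_eq0 => [/allP u0|i _]; last by rewrite -expr2 sqr_ge0.
apply/rowP => i; have := u0 i (mem_index_enum _).
by rewrite /= -expr2 sqrf_eq0 mxE => /eqP.
Qed.

Lemma sphere_neq0 n (r : R) (u : 'rV[R]_n) : 0 < r -> sphere r u -> u != 0.
Proof.
move=> r_gt0 /= ur; rewrite -dot_eq0 ur.
by rewrite expf_eq0 gt_eqF.
Qed.

Lemma sphere_normalize n (y : 'rV[R]_n) :
  y != 0 -> sphere 1 ((Num.sqrt (dot y y))^-1 *: y).
Proof.
move=> y0; rewrite /sphere /= dotZl dotC dotZl mulrA -expr2 exprVn.
by rewrite sqr_sqrtr ?dot_ge0 // mulVf ?expr1n ?dot_eq0.
Qed.

Lemma sphere_ebase n (j : 'I_n) : sphere 1 (ebase R j).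
Proof.
rewrite /sphere /= /dot (bigD1 j) //= big1 => [|i ij]; last first.
  by rewrite /ebase !mxE (negbTE ij) andbF mul0r.
by rewrite /ebase !mxE !eqxx /= mulr1n mulr1 addr0 expr1n.
Qed.

End Dot.

Section Derivatives.
Variables (R : realType) (k : nat).
Local Notation V := 'rV[R]_k.

Lemma near_neq0 (x : V) : x != 0 -> \forall y \near x, y != 0.
Proof. by move=> x0; apply: (@cvgr_neq0 _ _ _ (nbhs x) _ id x) => //; exact: cvg_id. Qed.

Lemma dot_fun N (F G : V -> 'rV[R]_N) :
  (fun y => dot (F y) (G y)) = \sum_(i < N) ((fun y => F y 0 i) * (fun y => G y 0 i)).
Proof. by rewrite fct_sumE; apply/funext => y. Qed.

Lemma derive_dot N (F G : V -> 'rV[R]_N) x v :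
  derivable F x v -> derivable G x v ->
  'D_v (fun y => dot (F y) (G y)) x = dot ('D_v F x) (G x) + dot (F x) ('D_v G x).
Proof.
move=> dF dG; have /derivable_mxP dFi := dF; have /derivable_mxP dGi := dG.
rewrite dot_fun derive_sum => [|i]; last exact: derivableM.
rewrite /dot -big_split; apply: eq_bigr => i _ /=.
rewrite deriveM // !derive_mx // !mxE addrC; congr (_ + _); exact: mulrC.
Qed.

Lemma dot_derive_const_norm N (F : V -> 'rV[R]_N) c x v :
  (forall y, y != 0 -> dot (F y) (F y) = c) -> x != 0 -> derivable F x v ->
  dot (F x) ('D_v F x) = 0.
Proof.
move=> Fc x0 dF.
have : 'D_v (fun y => dot (F y) (F y)) x = 0.
  rewrite (near_eq_derive (g := cst c)) ?derive_cst //.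
  by near=> y; rewrite /= Fc //; near: y; exact: near_neq0.
by rewrite derive_dot // dotC => /eqP; rewrite -mulr2n mulrn_eq0 => /eqP.
Unshelve. all: by end_near. Qed.

Lemma dot_derive2_const_norm N (F : V -> 'rV[R]_N) c x v :
  (forall y, y != 0 -> dot (F y) (F y) = c) -> (forall y, y != 0 -> derivable F y v) ->
  x != 0 -> derivable ('D_v F) x v ->
  dot (F x) ('D_v ('D_v F) x) = - dot ('D_v F x) ('D_v F x).
Proof.
move=> Fc dF x0 ddF.
have : 'D_v (fun y => dot (F y) ('D_v F y)) x = 0.
  rewrite (near_eq_derive (g := cst 0)) ?derive_cst //.
  near=> y; have y0 : y != 0 by near: y; exact: near_neq0.
  by rewrite /= (dot_derive_const_norm Fc y0 (dF y y0)).
have dFx := dF x x0.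
by rewrite derive_dot // => /eqP; rewrite addrC addr_eq0 => /eqP.
Unshelve. all: by end_near. Qed.

Lemma derivable_row_mx N1 N2 (A : V -> 'rV[R]_N1) (B : V -> 'rV[R]_N2) x v :
  derivable A x v -> derivable B x v -> derivable (fun y => row_mx (A y) (B y)) x v.
Proof.
move=> /derivable_mxP dA /derivable_mxP dB; apply/derivable_mxP => i j.
rewrite -(splitK j); case: (fintype.split j) => j' /=.
- by under eq_fun do rewrite row_mxEl; exact: dA.
- by under eq_fun do rewrite row_mxEr; exact: dB.
Qed.

Lemma derive_row_mx N1 N2 (A : V -> 'rV[R]_N1) (B : V -> 'rV[R]_N2) x v :
  derivable A x v -> derivable B x v ->
  'D_v (fun y => row_mx (A y) (B y)) x = row_mx ('D_v A x) ('D_v B x).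
Proof.
move=> dA dB; rewrite derive_mx; last exact: derivable_row_mx.
apply/matrixP => i j; rewrite mxE -(splitK j); case: (fintype.split j) => j' /=.
- by rewrite row_mxEl derive_mx // mxE; under eq_fun do rewrite row_mxEl.
- by rewrite row_mxEr derive_mx // mxE; under eq_fun do rewrite row_mxEr.
Qed.

Lemma derive_row_mxZ N1 N2 (A1 : V -> 'rV[R]_N1) (A2 : V -> 'rV[R]_N2) s t v
    (T : V -> 'rV[R]_(N1 + N2)) x :
  (forall y, y != 0 -> derivable A1 y v) -> (forall y, y != 0 -> derivable A2 y v) ->
  (forall y, y != 0 -> T y = row_mx (s *: A1 y) (t *: A2 y)) -> x != 0 ->
  'D_v T x = row_mx (s *: 'D_v A1 x) (t *: 'D_v A2 x).
Proof.
move=> dA1 dA2 TE x0.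
rewrite (near_eq_derive (g := fun y => row_mx (s *: A1 y) (t *: A2 y))); last first.
  by near=> y; rewrite /= TE //; near: y; exact: near_neq0.
have dA1x := dA1 x x0; have dA2x := dA2 x x0.
by rewrite derive_row_mx ?deriveZ //; apply: derivableZ.
Unshelve. all: by end_near. Qed.

Lemma derive2_row_mxZ N1 N2 (A1 : V -> 'rV[R]_N1) (A2 : V -> 'rV[R]_N2) s t v
    (T : V -> 'rV[R]_(N1 + N2)) x :
  (forall y, y != 0 -> derivable A1 y v) -> (forall y, y != 0 -> derivable A2 y v) ->
  (forall y, y != 0 -> derivable ('D_v A1) y v) ->
  (forall y, y != 0 -> derivable ('D_v A2) y v) ->
  (forall y, y != 0 -> T y = row_mx (s *: A1 y) (t *: A2 y)) -> x != 0 ->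
  'D_v ('D_v T) x = row_mx (s *: 'D_v ('D_v A1) x) (t *: 'D_v ('D_v A2) x).
Proof.
move=> dA1 dA2 ddA1 ddA2 TE x0.
by apply: (derive_row_mxZ ddA1 ddA2) => // y y0; exact: (derive_row_mxZ dA1 dA2 TE y0).
Qed.

End Derivatives.

Section SphereMap.
Variables (R : realType) (k N : nat) (f : 'rV[R]_k -> 'rV[R]_N).

Lemma hext_sphere x : sphere 1 x -> hext f x = f x.
Proof. by rewrite /sphere /= /hext => ->; rewrite expr1n sqrtr1 invr1 scale1r. Qed.

Hypothesis f_smooth : smooth_on_sphere f.

(* [derivable] unfolds to a product, which defeats [exact:]; these two lemmas are used
   through plain [exact]. *)
Lemma derivable_hext v y : y != 0 -> derivable (hext f) y v.
Proof. by move=> y0; apply: diff_derivable; exact: (f_smooth [::] y0). Qed.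

Lemma derivable_derive_hext v w y : y != 0 -> derivable ('D_v (hext f)) y w.
Proof. by move=> y0; apply: diff_derivable; exact: (f_smooth [:: v] y0). Qed.

Variables (r c : R).
Hypothesis f_sphere : forall x, sphere 1 x -> sphere r (f x).

Let hext_norm y : y != 0 -> dot (hext f y) (hext f y) = r ^+ 2.
Proof. by move=> y0; exact: (f_sphere (sphere_normalize y0)). Qed.

Lemma dot_dS_sphere_map j z : sphere 1 z -> dot (f z) (dS f j z) = 0.
Proof.
move=> zs; have z0 := sphere_neq0 ltr01 zs; rewrite /dS -(hext_sphere zs).
exact (dot_derive_const_norm hext_norm z0 (derivable_hext z0)).
Qed.

Lemma dot_lapS_sphere_map z : sphere 1 z -> dot (lapS f z) (f z) = - dnorm2 f z.
Proof.
move=> zs; rewrite /lapS /dnorm2 dot_suml -sumrN; apply: eq_bigr => j _.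
rewrite dotC -(hext_sphere zs) (dot_derive2_const_norm hext_norm) //.
- by move=> y y0; exact (derivable_hext y0).
- exact: sphere_neq0 ltr01 zs.
- exact (derivable_derive_hext (sphere_neq0 ltr01 zs)).
Qed.

Hypotheses (f_harmonic : harmonic_into r f)
           (f_energy : forall x, sphere 1 x -> energy_density f x = c).

Lemma dnorm2_const_energy z : sphere 1 z -> dnorm2 f z = 2 * c.
Proof. by move=> zs; rewrite -(f_energy zs) /energy_density mulrC divfK ?pnatr_eq0. Qed.

Lemma lapS_harmonic z : sphere 1 z -> lapS f z = (- (2 * c) / r ^+ 2) *: f z.
Proof.
move=> zs; have /eqP := f_harmonic zs; rewrite /tension /tproj subr_eq0 => /eqP ->.
by rewrite dot_lapS_sphere_map // dnorm2_const_energy.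
Qed.

End SphereMap.

Lemma sqr_div_eq (R : realFieldType) (D x y : R) : D != 0 -> 0 < x -> 0 < y ->
  ((D / x ^+ 2) ^+ 2 == (- D / y ^+ 2) ^+ 2) = (x == y).
Proof.
move=> D0 x_gt0 y_gt0; rewrite mulNr sqrrN !expr_div_n -!exprM.
rewrite (inj_eq (mulfI (expf_neq0 2 D0))) (inj_eq invr_inj).
by rewrite eqrXn2 ?ltW.
Qed.

Section PairMap.
Variables (R : realType) (n N1 N2 : nat).
Variables (f1 : 'rV[R]_n.+1 -> 'rV[R]_N1) (f2 : 'rV[R]_n.+1 -> 'rV[R]_N2).
Hypotheses (f1_smooth : smooth_on_sphere f1) (f2_smooth : smooth_on_sphere f2).
Local Notation Phi := (sphere_pair_map f1 f2).

Lemma dS_pair j z : z != 0 -> dS Phi j z = row_mx (dS f1 j z) (dS f2 j z).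
Proof.
move=> z0; rewrite /dS (derive_row_mxZ (A1 := hext f1) (A2 := hext f2) (s := 1) (t := 1)
  _ _ _ z0) ?scale1r //.
- by move=> y y0; exact (derivable_hext f1_smooth y0).
- by move=> y y0; exact (derivable_hext f2_smooth y0).
- by move=> y _; rewrite !scale1r.
Qed.

Lemma lapS_row_mxZ (g : 'rV[R]_n.+1 -> 'rV[R]_(N1 + N2)) s t z :
  (forall y, y != 0 -> hext g y = row_mx (s *: hext f1 y) (t *: hext f2 y)) -> z != 0 ->
  lapS g z = row_mx (s *: lapS f1 z) (t *: lapS f2 z).
Proof.
move=> gE z0; rewrite /lapS !scaler_sumr -sum_row_mx; apply: eq_bigr => j _.
apply: (derive2_row_mxZ _ _ _ _ gE z0) => y y0.
- exact (derivable_hext f1_smooth y0).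
- exact (derivable_hext f2_smooth y0).
- exact (derivable_derive_hext f1_smooth y0).
- exact (derivable_derive_hext f2_smooth y0).
Qed.

Variables (r1 r2 c1 c2 : R).
Hypotheses (r1_gt0 : 0 < r1) (r2_gt0 : 0 < r2) (radii : r1 ^+ 2 + r2 ^+ 2 = 1).
Hypothesis f1_sphere : forall x, sphere 1 x -> sphere r1 (f1 x).
Hypothesis f2_sphere : forall x, sphere 1 x -> sphere r2 (f2 x).
Hypotheses (f1_harmonic : harmonic_into r1 f1) (f2_harmonic : harmonic_into r2 f2).
Hypothesis f1_energy : forall x, sphere 1 x -> energy_density f1 x = c1.
Hypothesis f2_energy : forall x, sphere 1 x -> energy_density f2 x = c2.

Local Notation D := (2 * c2 * r1 ^+ 2 - 2 * c1 * r2 ^+ 2).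
Local Notation a := (D / r1 ^+ 2).
Local Notation b := (- D / r2 ^+ 2).

Let r2_sqr : r2 ^+ 2 = 1 - r1 ^+ 2.
Proof. by rewrite -radii addrC addKr. Qed.

Let r1_sqr_neq0 : r1 ^+ 2 != 0.
Proof. by rewrite expf_eq0 gt_eqF. Qed.

Let r2_sqr_neq0 : 1 - r1 ^+ 2 != 0.
Proof. by rewrite -r2_sqr expf_eq0 gt_eqF. Qed.

Let lapS_f1 z (zs : sphere 1 z) := lapS_harmonic f1_smooth f1_sphere f1_harmonic f1_energy zs.
Let lapS_f2 z (zs : sphere 1 z) := lapS_harmonic f2_smooth f2_sphere f2_harmonic f2_energy zs.

Lemma tension_pair z : sphere 1 z -> tension 1 Phi z = row_mx (a *: f1 z) (b *: f2 z).
Proof.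
move=> zs; have z0 := sphere_neq0 ltr01 zs.
have f1z : dot (f1 z) (f1 z) = r1 ^+ 2 := f1_sphere zs.
have f2z : dot (f2 z) (f2 z) = r2 ^+ 2 := f2_sphere zs.
have Phiz : Phi z = row_mx (f1 z) (f2 z) by [].
rewrite /tension /tproj (lapS_row_mxZ (s := 1) (t := 1) _ z0) ?scale1r; last first.
  by move=> y _; rewrite !scale1r.
rewrite (lapS_f1 zs) (lapS_f2 zs) Phiz dot_row_mx !dotZl f1z f2z expr1n divr1.
rewrite scale_row_mx opp_row_mx add_row_mx -!scalerBl.
by congr row_mx; congr (_ *: _); rewrite r2_sqr; field; rewrite (gt_eqF r1_gt0) r2_sqr_neq0.
Qed.

Lemma dot_tension_dS_pair j z : sphere 1 z -> dot (tension 1 Phi z) (dS Phi j z) = 0.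
Proof.
move=> zs; rewrite tension_pair // (dS_pair _ (sphere_neq0 ltr01 zs)) dot_row_mx !dotZl.
rewrite (dot_dS_sphere_map f1_smooth f1_sphere) ?(dot_dS_sphere_map f2_smooth f2_sphere) //.
by rewrite !mulr0 addr0.
Qed.

Lemma dnorm2_pair z : sphere 1 z -> dnorm2 Phi z = 2 * c1 + 2 * c2.
Proof.
move=> zs; have z0 := sphere_neq0 ltr01 zs; rewrite /dnorm2.
under eq_bigr do rewrite (dS_pair _ z0) dot_row_mx.
rewrite big_split /= -/(dnorm2 f1 z) -/(dnorm2 f2 z).
by rewrite (dnorm2_const_energy f1_energy zs) (dnorm2_const_energy f2_energy zs).
Qed.

Lemma lapS_tension_pair z : sphere 1 z ->
  lapS (tension 1 Phi) z =
  row_mx ((a * (- (2 * c1) / r1 ^+ 2)) *: f1 z) ((b * (- (2 * c2) / r2 ^+ 2)) *: f2 z).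
Proof.
move=> zs; rewrite (lapS_row_mxZ (s := a) (t := b) _ (sphere_neq0 ltr01 zs)).
  by rewrite (lapS_f1 zs) (lapS_f2 zs) !scalerA.
by move=> y y0; rewrite /hext tension_pair //; exact: sphere_normalize y0.
Qed.

Lemma bitension_pair z : sphere 1 z ->
  bitension Phi z =
  row_mx ((r2 ^+ 2 * (a ^+ 2 - b ^+ 2)) *: f1 z) ((r1 ^+ 2 * (b ^+ 2 - a ^+ 2)) *: f2 z).
Proof.
move=> zs; have f1z : dot (f1 z) (f1 z) = r1 ^+ 2 := f1_sphere zs.
have f2z : dot (f2 z) (f2 z) = r2 ^+ 2 := f2_sphere zs.
have Phiz : Phi z = row_mx (f1 z) (f2 z) by [].
rewrite /bitension /roughLap /curvTrace lapS_tension_pair //.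
rewrite big1 => [|j _]; last by rewrite dot_tension_dS_pair // scale0r.
under eq_bigr do rewrite dot_tension_dS_pair // scale0r sub0r.
rewrite sumrN -scaler_suml -/(dnorm2 Phi z) dnorm2_pair //.
rewrite /tproj tension_pair // Phiz dot_row_mx !dotZl f1z f2z expr1n divr1 addr0.
rewrite opprK !scale_row_mx !scalerA opp_row_mx !add_row_mx -!scalerBl -!scalerDl.
by congr row_mx; congr (_ *: _); rewrite r2_sqr; field; rewrite (gt_eqF r1_gt0) r2_sqr_neq0.
Qed.

Lemma eq0_on_sphere_row_mxZ (g : 'rV[R]_n.+1 -> 'rV[R]_(N1 + N2)) s t :
  (forall z, sphere 1 z -> g z = row_mx (s *: f1 z) (t *: f2 z)) ->
  (forall z, sphere 1 z -> g z = 0) <-> s = 0 /\ t = 0.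
Proof.
move=> gE; split=> [g0 | [s0 t0] z zs]; last by rewrite gE // s0 t0 !scale0r row_mx0.
have zs := sphere_ebase R (ord0 : 'I_n.+1).
have /eqP := g0 _ zs; rewrite gE // row_mx_eq0 !scaler_eq0.
rewrite (negbTE (sphere_neq0 r1_gt0 (f1_sphere zs))).
rewrite (negbTE (sphere_neq0 r2_gt0 (f2_sphere zs))) !orbF.
by case/andP=> /eqP -> /eqP ->.
Qed.

Lemma pair_tension_eq0 : (forall z, sphere 1 z -> tension 1 Phi z = 0) <-> D = 0.
Proof.
rewrite (eq0_on_sphere_row_mxZ tension_pair); split=> [[/eqP + _] | ->].
  by rewrite mulf_eq0 invr_eq0 (negbTE r1_sqr_neq0) orbF => /eqP.
by rewrite oppr0 !mul0r.
Qed.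

Lemma pair_bitension_eq0 :
  (forall z, sphere 1 z -> bitension Phi z = 0) <-> a ^+ 2 = b ^+ 2.
Proof.
rewrite (eq0_on_sphere_row_mxZ bitension_pair); split=> [[/eqP + _] | ->].
  by rewrite mulf_eq0 expf_eq0 (gt_eqF r2_gt0) andbF /= subr_eq0 => /eqP.
by rewrite !subrr !mulr0.
Qed.

Lemma pair_proper_biharmonicE : proper_biharmonic Phi <-> r1 = r2 /\ D != 0.
Proof.
rewrite /proper_biharmonic pair_bitension_eq0 pair_tension_eq0.
split=> [[ab D0] | [r12 D0]].
  have D0' : D != 0 by apply/eqP.
  by split=> //; apply/eqP; rewrite -(sqr_div_eq D0') // ab eqxx.
split; last by move/eqP: D0.
by apply/eqP; rewrite sqr_div_eq // r12 eqxx.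
Qed.

End PairMap.

Lemma inv_sqrt2E (R : rcfType) (r : R) : 0 < r -> (r = 1 / Num.sqrt 2) <-> (r ^+ 2 = 2^-1).
Proof.
move=> r_gt0; rewrite div1r -sqrtrV ?ler0n //.
split=> [-> | <-]; first by rewrite sqr_sqrtr // invr_ge0 ler0n.
by rewrite sqrtr_sqr gtr0_norm.
Qed.

Lemma equal_radii_iff (R : rcfType) (r1 r2 c1 c2 : R) :
  0 < r1 -> 0 < r2 -> r1 ^+ 2 + r2 ^+ 2 = 1 ->
  (r1 = r2 /\ 2 * c2 * r1 ^+ 2 - 2 * c1 * r2 ^+ 2 != 0) <->
  [/\ r1 = 1 / Num.sqrt 2, r2 = 1 / Num.sqrt 2 & c1 != c2].
Proof.
move=> r1_gt0 r2_gt0 radii; split=> [[r12 D0] | [r1E r2E c12]].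
- subst r2; have r1_sqr : r1 ^+ 2 = 2^-1 by lra.
  have r1E := (inv_sqrt2E r1_gt0).2 r1_sqr.
  by split=> //; apply: contraNneq D0 => ->; rewrite subrr.
- split; first by rewrite r1E r2E.
  rewrite ((inv_sqrt2E r1_gt0).1 r1E) ((inv_sqrt2E r2_gt0).1 r2E).
  have -> : 2 * c2 * 2^-1 - 2 * c1 * 2^-1 = c2 - c1 :> R by field.
  by rewrite subr_eq0 eq_sym.
Qed.

Theorem mainTheorem10 (R : realType) (m n1 n2 : nat) (r1 r2 : R)
  (phi1 : 'rV[R]_(m.+1) -> 'rV[R]_(n1.+1)) (phi2 : 'rV[R]_(m.+1) -> 'rV[R]_(n2.+1))
  (c1 c2 : R) :
  (1 <= m)%N -> 0 < r1 -> 0 < r2 -> r1 ^+ 2 + r2 ^+ 2 = 1 ->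
  smooth_on_sphere phi1 -> smooth_on_sphere phi2 ->
  (forall x, sphere 1 (x : 'rV[R]_(m.+1)) -> sphere r1 (phi1 x)) ->
  (forall x, sphere 1 (x : 'rV[R]_(m.+1)) -> sphere r2 (phi2 x)) ->
  harmonic_into r1 phi1 -> harmonic_into r2 phi2 ->
  (forall x, sphere 1 (x : 'rV[R]_(m.+1)) -> energy_density phi1 x = c1) ->
  (forall x, sphere 1 (x : 'rV[R]_(m.+1)) -> energy_density phi2 x = c2) ->
  (proper_biharmonic (sphere_pair_map phi1 phi2) <->
   [/\ r1 = 1 / Num.sqrt 2, r2 = 1 / Num.sqrt 2 & c1 != c2]).
Proof.
move=> _ r1_gt0 r2_gt0 radii smooth1 smooth2 sphere1 sphere2 harm1 harm2 energy1 energy2.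
rewrite (pair_proper_biharmonicE smooth1 smooth2 r1_gt0 r2_gt0 radii sphere1 sphere2
  harm1 harm2 energy1 energy2).
exact: equal_radii_iff.
Qed.
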